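(* Let $g\colon\mathbb{R}^d\to\mathbb{R}\cup\{+\infty\}$ be closed and $\alpha$-strongly convex with minimizer $x^\star$. For each $x\in\mathbb{R}^d$ let $g_x\colon\mathbb{R}^d\to\mathbb{R}\cup\{+\infty\}$ be closed convex with $|g_x(y)-g(y)|\le\frac q2\|y-x\|^2$ for all $y$. Let $\theta>q$, $x_0\in\mathbb{R}^d$ and $x_{k+1}=\operatorname{argmin}_{x}\{g_{x_k}(x)+\frac\theta2\|x-x_k\|^2\}$. Then for all $k\ge0$, $$\|x_{k+1}-x^\star\|\le\Big(\frac{\theta+q}{\alpha+\theta}\Big)^{\frac{k+1}{2}}\|x_0-x^\star\|.$$ *)

From HB Require Import structures.
From mathcomp Require Import all_boot all_order all_algebra.
From mathcomp Require Import all_classical all_reals all_analysis.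
Set Implicit Arguments. Unset Strict Implicit. Unset Printing Implicit Defensive.
Import Order.TTheory GRing.Theory Num.Theory.
Local Open Scope ring_scope.
Local Open Scope ereal_scope.

Section Defs.
Variables (R : realType) (d : nat).
Notation vec := 'rV[R]_d.

Definition enorm (v : vec) : R := Num.sqrt (\sum_(i < d) v ord0 i ^+ 2)%R.

(* values in R ∪ {+oo} *)
Definition no_minfty (f : vec -> \bar R) : Prop := forall x, f x != -oo.

(* closed = lower semicontinuous (w.r.t. the Euclidean norm) *)
Definition lsc (f : vec -> \bar R) : Prop :=
  forall (x : vec) (t : R), t%:E < f x ->
    exists2 delta : R, (0 < delta)%R &
      forall y : vec, (enorm (y - x) < delta)%R -> t%:E < f y.

Definition closed_fun (f : vec -> \bar R) : Prop := no_minfty f /\ lsc f.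

Definition convex_fun (f : vec -> \bar R) : Prop :=
  forall (x y : vec) (l : R), (0 < l < 1)%R ->
    f (l *: x + (1 - l) *: y)%R <= l%:E * f x + (1 - l)%:E * f y.

Definition strongly_convex (alpha : R) (f : vec -> \bar R) : Prop :=
  forall (x y : vec) (l : R), (0 < l < 1)%R ->
    f (l *: x + (1 - l) *: y)%R <=
      l%:E * f x + (1 - l)%:E * f y
      - (alpha / 2 * l * (1 - l) * enorm (x - y) ^+ 2)%:E.

Definition is_minimizer (f : vec -> \bar R) (x : vec) : Prop :=
  forall y, f x <= f y.
End Defs.

From HB Require Import structures.
From mathcomp Require Import all_boot all_order all_algebra.
From mathcomp Require Import all_classical all_reals all_analysis.
From mathcomp Require Import ring lra.
Import Order.TTheory GRing.Theory Num.Theory.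

(* Let h_k(y) = g_{x_k}(y) + theta/2 |y - x_k|^2, so that x_{k+1} minimizes h_k.
   Since g is alpha-strongly convex and h_k is theta-strongly convex, both grow
   quadratically away from their minimizers:
     g(x_{k+1}) >= g(x_star) + alpha/2 |x_{k+1} - x_star|^2,
     h_k(x_star) >= h_k(x_{k+1}) + theta/2 |x_star - x_{k+1}|^2.
   Adding these and using the model bounds |g_{x_k} - g| <= q/2 |. - x_k|^2 at
   x_star and at x_{k+1} yields the one-step inequality
     (alpha+theta) e_{k+1}^2 + (theta-q) |x_{k+1}-x_k|^2 <= (theta+q) e_k^2,
   with e_k = |x_k - x_star|, hence e_{k+1}^2 <= r e_k^2 where
   r = (theta+q)/(alpha+theta).
   Iterating and taking square roots gives the claimed rate.  The degenerate
   case q < 0 is separate: the two model bounds then force x_{k+1} = x_star. *)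

Set Implicit Arguments.
Unset Strict Implicit.
Unset Printing Implicit Defensive.

Local Open Scope ring_scope.

Section Euclid.
Variables (R : realType) (d : nat).
Notation vec := 'rV[R]_d.

Lemma enorm_sq (v : vec) : enorm v ^+ 2 = \sum_(i < d) v ord0 i ^+ 2.
Proof. by rewrite sqr_sqrtr // sumr_ge0 // => i _; rewrite sqr_ge0. Qed.

Lemma enorm_ge0 (v : vec) : 0 <= enorm v.
Proof. exact: sqrtr_ge0. Qed.

Lemma enorm_distC (a b : vec) : enorm (a - b) = enorm (b - a).
Proof. by rewrite /enorm; congr Num.sqrt; apply: eq_bigr => i _; rewrite !mxE; ring. Qed.

(* Distance from a convex combination: the identity behind the strong
   convexity of y |-> |y - c|^2 (with modulus 2). *)
Lemma enorm_convex_comb (a b c : vec) (l : R) :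
  enorm (l *: a + (1 - l) *: b - c) ^+ 2 =
  l * enorm (a - c) ^+ 2 + (1 - l) * enorm (b - c) ^+ 2
  - l * (1 - l) * enorm (a - b) ^+ 2.
Proof.
rewrite !enorm_sq !mulr_sumr -sumrN -!big_split /=.
by apply: eq_bigr => i _; rewrite !mxE; ring.
Qed.
End Euclid.

Section RealFacts.
Variable R : realType.

(* Passing to the limit l -> 0+ in an inequality valid on the open unit
   interval; used to extract quadratic growth from strong convexity. *)
Lemma ler_unit_interval_limit (X c Y : R) :
  (forall l, 0 < l < 1 -> X + c * (1 - l) <= Y) -> X + c <= Y.
Proof.
move=> H.
have [c_le0|c_gt0] := lerP c 0.
  by have := H 2^-1; rewrite invr_gt0 invf_lt1 ?ltr1n // ltr0n => /(_ isT); nra.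
apply/ler_addgt0Pr => e e_gt0.
pose l := Num.min 2^-1 (e / c).
have l_gt0 : 0 < l by rewrite lt_min invr_gt0 ltr0n divr_gt0.
have l_lt1 : l < 1 by rewrite gt_min invf_lt1 ?ltr1n.
have cl_le_e : c * l <= e by rewrite mulrC -ler_pdivlMr // ge_min lexx orbT.
by have := H l; rewrite l_gt0 l_lt1 => /(_ isT); lra.
Qed.

Lemma sqrt_geometric_decay (r : R) (e : nat -> R) :
  0 <= r -> (forall j, 0 <= e j) -> (forall j, e j.+1 ^+ 2 <= r * e j ^+ 2) ->
  forall k, e k.+1 <= r `^ (k.+1%:R / 2) * e 0%N.
Proof.
move=> r_ge0 e_ge0 e_step k.
have sq_decay j : e j ^+ 2 <= r ^+ j * e 0%N ^+ 2.
  elim: j => [|j IH]; first by rewrite expr0 mul1r.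
  by rewrite [r ^+ j.+1]exprS -mulrA (le_trans (e_step j)) // ler_wpM2l.
have half_powE : (r `^ (k.+1%:R / 2)) ^+ 2 = r ^+ k.+1.
  by rewrite -powR_mulrn ?powR_ge0 // -powRrM divfK ?pnatr_eq0 // powR_mulrn.
rewrite -ler_sqr ?nnegrE ?mulr_ge0 ?powR_ge0 // exprMn half_powE.
exact: sq_decay.
Qed.
End RealFacts.

Section Convex.
Variables (R : realType) (d : nat).
Notation vec := 'rV[R]_d.
Local Open Scope ereal_scope.

Lemma convex_add_sq_strongly_convex (f : vec -> \bar R) (theta : R) (z : vec) :
  no_minfty f -> convex_fun f ->
  strongly_convex theta (fun y => f y + (theta / 2 * enorm (y - z) ^+ 2)%:E).
Proof.
move=> f_fin f_cvx x y l l01; have /andP[l_gt0 l_lt1] := l01.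
have l'_gt0 : (0 < 1 - l)%R by rewrite subr_gt0.
have := f_cvx x y l l01.
case fx: (f x) => [a| |]; last by have := f_fin x; rewrite fx.
all: case fy: (f y) => [b| |]; try by have := f_fin y; rewrite fy.
- move: (f_fin (l *: x + (1 - l) *: y)%R).
  case: (f _) => [c|//|//] _ /=; rewrite !lee_fin enorm_convex_comb; nra.
(* If f x or f y is +oo, the right-hand side is +oo. *)
all: by move=> _; rewrite ?addye // ?gt0_muley ?lte_fin // ?addey ?addye // leey.
Qed.

Lemma strongly_convex_quadratic_growth (h : vec -> \bar R) (mu : R) (p : vec) :
  strongly_convex mu h -> is_minimizer h p -> h p \is a fin_num ->
  forall y, h p + (mu / 2 * enorm (y - p) ^+ 2)%:E <= h y.
Proof.
move=> h_sc p_min hp_fin y.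
have hpE : h p = (fine (h p))%:E by rewrite fineK.
case hy: (h y) => [Y| |]; [|exact: leey|by have := p_min y; rewrite hy hpE].
rewrite hpE -EFinD lee_fin; apply: ler_unit_interval_limit => l l01.
have /andP[l_gt0 l_lt1] := l01.
have := le_trans (p_min (l *: y + (1 - l) *: p)%R) (h_sc y p l l01).
by rewrite hy hpE /= lee_fin; nra.
Qed.

Lemma EFin_of_bounded (e : \bar R) (r : R) : e != -oo -> e <= r%:E -> exists a, e = a%:E.
Proof. by case: e => [a _ _| |]; [exists a| |rewrite eqxx]. Qed.

(* It combines the quadratic growth of g
   at s and of the proximal objective at p with the two model bounds. *)
Lemma prox_step_inequality (g gz : vec -> \bar R) (alpha q theta : R) (s z p : vec) :
  strongly_convex alpha g -> is_minimizer g s -> g s \is a fin_num ->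
  no_minfty gz -> convex_fun gz ->
  (forall y, gz y <= g y + (q / 2 * enorm (y - z) ^+ 2)%:E /\
             g y <= gz y + (q / 2 * enorm (y - z) ^+ 2)%:E) ->
  is_minimizer (fun y => gz y + (theta / 2 * enorm (y - z) ^+ 2)%:E) p ->
  ((alpha + theta) * enorm (p - s) ^+ 2 + (theta - q) * enorm (p - z) ^+ 2
     <= (theta + q) * enorm (s - z) ^+ 2)%R.
Proof.
move=> g_sc s_min gs_fin gz_fin gz_cvx model p_min.
have gsE : g s = (fine (g s))%:E by rewrite fineK.
have [A gzsE] : exists A, gz s = A%:E.
  apply: (EFin_of_bounded (r := fine (g s) + q / 2 * enorm (s - z) ^+ 2) (gz_fin s)).
  by have [+ _] := model s; rewrite gsE.
have [B gzpE] : exists B, gz p = B%:E.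
  have := p_min s; rewrite gzsE.
  by move: (gz_fin p); case: (gz p) => [B _ _| |]; [exists B| |rewrite eqxx].
have [C gpE] : exists C, g p = C%:E.
  apply: (EFin_of_bounded (r := B + q / 2 * enorm (p - z) ^+ 2)).
    by apply/eqP => gp; have := s_min p; rewrite gp gsE.
  by have [_] := model p; rewrite gzpE.
have g_growth := strongly_convex_quadratic_growth g_sc s_min gs_fin p.
have hp_fin : gz p + (theta / 2 * enorm (p - z) ^+ 2)%:E \is a fin_num.
  by rewrite gzpE.
have h_growth := strongly_convex_quadratic_growth
  (convex_add_sq_strongly_convex theta z gz_fin gz_cvx) p_min hp_fin s.
have [model_s _] := model s; have [_ model_p] := model p.
move: g_growth h_growth model_s model_p.
rewrite gsE gpE gzsE gzpE /= !lee_fin enorm_distC [enorm (s - p)]enorm_distC.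
lra.
Qed.

(* With q < 0 the two model bounds are contradictory unless y = z: they give
   0 <= q |y - z|^2 at any point where g is finite. *)
Lemma negative_model_error_collapse (g gz : vec -> \bar R) (q : R) (y z : vec) :
  (q < 0)%R -> g y \is a fin_num -> gz y != -oo ->
  gz y <= g y + (q / 2 * enorm (y - z) ^+ 2)%:E ->
  g y <= gz y + (q / 2 * enorm (y - z) ^+ 2)%:E ->
  enorm (y - z) = 0%R.
Proof.
move=> q_lt0 gy_fin gzy_fin upper lower.
have gyE : g y = (fine (g y))%:E by rewrite fineK.
rewrite gyE in upper lower.
have [A gzyE] := EFin_of_bounded gzy_fin upper.
move: upper lower; rewrite gzyE /= !lee_fin => upper lower.
have sq_le0 : (enorm (y - z) ^+ 2 <= 0)%R by nra.
by apply/eqP; rewrite -sqrf_eq0 eq_le sq_le0 sqr_ge0.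
Qed.
End Convex.

Local Open Scope ereal_scope.

Theorem mainTheorem10 (R : realType) (d : nat)
  (g : 'rV[R]_d -> \bar R) (alpha : R) (xstar : 'rV[R]_d)
  (gx : 'rV[R]_d -> 'rV[R]_d -> \bar R) (q theta : R)
  (x : nat -> 'rV[R]_d) :
  closed_fun g -> (0 < alpha)%R -> strongly_convex alpha g ->
  is_minimizer g xstar -> g xstar \is a fin_num ->
  (forall z, closed_fun (gx z) /\ convex_fun (gx z)) ->
  (forall z y, gx z y <= g y + (q / 2 * enorm (y - z) ^+ 2)%:E /\
               g y <= gx z y + (q / 2 * enorm (y - z) ^+ 2)%:E) ->
  (q < theta)%R ->
  (forall k, is_minimizer
      (fun y => gx (x k) y + (theta / 2 * enorm (y - x k) ^+ 2)%:E) (x k.+1)) ->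
  forall k : nat,
    (enorm (x k.+1 - xstar)
      <= ((theta + q) / (alpha + theta)) `^ (k.+1%:R / 2) * enorm (x 0%N - xstar))%R.
Proof.
move=> _ alpha_gt0 g_sc xstar_min gxstar_fin gx_props model q_lt_theta prox k.
have [q_lt0|q_ge0] := ltrP q 0.
  (* Degenerate case: x_{k+1} = x_star. *)
  have [[gx_fin _] _] := gx_props (x k.+1).
  have [upper lower] := model (x k.+1) xstar.
  rewrite enorm_distC (negative_model_error_collapse q_lt0 gxstar_fin (gx_fin xstar) upper lower).
  by rewrite mulr_ge0 ?powR_ge0 ?enorm_ge0.
have rate_ge0 : (0 <= (theta + q) / (alpha + theta))%R by rewrite divr_ge0 //; lra.
apply: (sqrt_geometric_decay (e := fun j => enorm (x j - xstar))) => // [j|j].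
  exact: enorm_ge0.
have [[gx_fin _] gx_cvx] := gx_props (x j).
have := prox_step_inequality g_sc xstar_min gxstar_fin gx_fin gx_cvx (model (x j)) (prox j).
rewrite mulrAC ler_pdivlMr ?[enorm (xstar - _)]enorm_distC; last lra.
by have := sqr_ge0 (enorm (x j.+1 - x j)); nra.
Qed.
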